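(* Let $k\ge 4$ and $n\ge 4k^2$. Then there exist constants $c_k,C_k>0$ depending only on $k$ such that \[ c_kn\le crx_k(Q_n)\le C_kn. \] Thus $crx_k(Q_n)=\Theta_n(n)$.
   Context: $Q_n$ is the $n$-dimensional discrete binary cube: vertex set $\{0,1\}^n$, two vectors adjacent iff they differ in exactly one coordinate. An edge-coloured cycle is rainbow if its edges have distinct colours. For a graph $G$ in which any $k$ vertices lie on a common cycle, $crx_k(G)$ is the minimum number of colours in an edge-colouring of $G$ such that every set of $k$ vertices of $G$ lies in some rainbow cycle. *)

From HB Require Import structures.
From mathcomp Require Import all_boot all_order all_algebra.
Set Implicit Arguments. Unset Strict Implicit. Unset Printing Implicit Defensive.

Definition cube_vertex (n : nat) := {ffun 'I_n -> bool}.

Definition cube_adj (n : nat) : rel (cube_vertex n) :=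
  fun x y => #|[set i : 'I_n | x i != y i]| == 1%N.

Definition is_cube_cycle (n : nat) (c : seq (cube_vertex n)) : bool :=
  [&& (3 <= size c)%N, uniq c & cycle (@cube_adj n) c].

(* Edge colourings of Q_n with colours in 'I_m: a symmetric function on
   pairs of vertices (only values on edges matter). *)
Definition edge_colouring (n m : nat) (col : cube_vertex n -> cube_vertex n -> 'I_m) :=
  forall x y, col x y = col y x.

Definition cycle_colours (n m : nat) (col : cube_vertex n -> cube_vertex n -> 'I_m)
  (c : seq (cube_vertex n)) : seq 'I_m :=
  [seq col p.1 p.2 | p <- zip c (rot 1 c)].

Definition rainbow_cycle (n m : nat) (col : cube_vertex n -> cube_vertex n -> 'I_m)
  (c : seq (cube_vertex n)) : Prop :=
  is_cube_cycle c /\ uniq (cycle_colours col c).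

Definition k_rainbow_cyclic (k n m : nat) (col : cube_vertex n -> cube_vertex n -> 'I_m) :=
  forall S : {set cube_vertex n}, #|S| = k ->
    exists c : seq (cube_vertex n), rainbow_cycle col c /\ {subset S <= c}.

Definition crx_colourable (k n m : nat) : Prop :=
  exists col : cube_vertex n -> cube_vertex n -> 'I_m,
    edge_colouring col /\ k_rainbow_cyclic k col.

Definition is_crx (k n m : nat) : Prop :=
  crx_colourable k n m /\ forall m', crx_colourable k n m' -> (m <= m')%N.

From HB Require Import structures.
From mathcomp Require Import all_boot all_order all_algebra.
From mathcomp Require Import zify.
From Stdlib Require Import Classical.
Set Implicit Arguments. Unset Strict Implicit. Unset Printing Implicit Defensive.

(* Lower bound: a rainbow cycle through [0...0] and [1...1] contains an arc
   between them along which every coordinate changes, so it has at least [n]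
   edges, all of distinct colours.
   Upper bound: give the edge of direction [i] at [x] the colour made of [i]
   and of the first [5k + 1] coordinates of [x] with coordinate [i] cleared,
   so [n 2^(5k+1)] colours.  Through any [k] vertices, run a closed tour whose
   segment from one vertex to the next first stamps on the first [3k]
   coordinates a tag (a vertex with one coordinate flipped), then moves the
   other coordinates, and replaces the tag by a second one while a tag on the
   next [2k + 1] coordinates is displayed.  The tags are chosen greedily,
   distinct from each other and from the [k] vertices on their block, so every
   vertex and every colour of the tour determines the segment and the leg it
   comes from: the tour is a rainbow cycle. *)

Lemma zip_cons_cat (T : Type) (x : T) (s1 s2 : seq T) :
  zip (x :: s1 ++ s2) (s1 ++ s2) = zip (x :: s1) s1 ++ zip (last x s1 :: s2) s2.
Proof. by elim: s1 x => [|y s1 IH] x //=; rewrite IH. Qed.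

Lemma zip_cons_rcons (T : Type) (x z : T) (s : seq T) :
  zip (x :: s) (rcons s z) = rcons (zip (x :: s) s) (last x s, z).
Proof. by elim: s x => [|y s IH] x //=; rewrite IH. Qed.

Lemma uniq_flatten_map (I T : eqType) (s : seq I) (F : I -> seq T) :
  uniq s -> {in s, forall i, uniq (F i)} ->
  (forall i1 i2 x, i1 \in s -> i2 \in s -> x \in F i1 -> x \in F i2 -> i1 = i2) ->
  uniq (flatten (map F s)).
Proof.
elim: s => [|i s IH] //= /andP [Nis Us] UF Fdisj.
rewrite cat_uniq UF ?mem_head // IH //; first last.
- by move=> i1 i2 x H1 H2; apply: Fdisj; rewrite inE ?H1 ?H2 orbT.
- by move=> i1 H1; apply: UF; rewrite inE H1 orbT.
rewrite andbT; apply/hasPn => x /flattenP [_ /mapP [i2 Hi2 ->] Hx]; apply/negP => Hx'.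
by move: Nis; rewrite (Fdisj i i2 x (mem_head _ _) (mem_behead (Hi2 : i2 \in behead (i :: s))) Hx' Hx) Hi2.
Qed.

Section CubeWalks.
Variable n : nat.
Local Notation V := (cube_vertex n).
Implicit Types (a b w : V) (R : pred 'I_n).

Definition flip (v : V) (i : 'I_n) : V := [ffun j => if j == i then ~~ v j else v j].

Lemma flipE v i j : flip v i j = if j == i then ~~ v j else v j.
Proof. by rewrite ffunE. Qed.

Lemma cube_adj_flip v i : cube_adj v (flip v i).
Proof.
rewrite /cube_adj; apply/eqP.
have -> : [set j | v j != flip v i j] = [set i].
  by apply/setP => j; rewrite !inE flipE; case: (j == i); [case: (v j) | rewrite eqxx].
by rewrite cards1.
Qed.

Lemma scanl_flip_notin a s w j : w \in scanl flip a s -> j \notin s -> w j = a j.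
Proof.
elim: s a => [|i s IH] a //=; rewrite !inE => /orP [/eqP -> | Hw] /norP [Nji Njs].
  by rewrite flipE (negbTE Nji).
by rewrite (IH _ Hw Njs) flipE (negbTE Nji).
Qed.

Lemma scanl_flip_moved a s w : uniq s -> w \in scanl flip a s ->
  exists2 i, i \in s & w i != a i.
Proof.
case: s => [|i s] //= /andP [Nis Us]; rewrite inE => Hw; exists i; rewrite ?mem_head //.
case/orP: Hw => [/eqP -> | Hw]; last rewrite (scanl_flip_notin Hw Nis).
all: by rewrite flipE eqxx; case: (a i).
Qed.

Lemma scanl_flip_uniq a s : uniq s -> uniq (scanl flip a s).
Proof.
elim: s a => [|i s IH] a //= /andP [Nis Us]; rewrite IH // andbT.
by apply/negP => /(scanl_flip_moved Us) [j _]; rewrite eqxx.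
Qed.

Lemma foldl_flip a s : uniq s -> foldl flip a s = [ffun j => (j \in s) (+) a j].
Proof.
elim: s a => [|i s IH] a /=; first by move=> _; apply/ffunP => j; rewrite ffunE.
move=> /andP [Nis Us]; rewrite IH //; apply/ffunP => j; rewrite !ffunE inE.
by case: (eqVneq j i) => [-> |] //=; rewrite (negbTE Nis); case: (a i).
Qed.

Lemma path_scanl_flip a s : path (@cube_adj n) a (scanl flip a s).
Proof. by elim: s a => [|i s IH] a //=; rewrite cube_adj_flip IH. Qed.

Lemma last_scanl_flip a s : last a (scanl flip a s) = foldl flip a s.
Proof. by elim: s a => [|i s IH] a //=. Qed.

(* An edge is encoded as its tail and its direction. *)
Fixpoint flip_edges a (s : seq 'I_n) : seq (V * 'I_n) :=
  if s is i :: s' then (a, i) :: flip_edges (flip a i) s' else [::].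

Lemma flip_edges_dirs a s : [seq e.2 | e <- flip_edges a s] = s.
Proof. by elim: s a => [|i s IH] a //=; rewrite IH. Qed.

Lemma flip_edges_notin a s e j : e \in flip_edges a s -> j \notin s -> e.1 j = a j.
Proof.
elim: s a => [|i s IH] a //=; rewrite !inE => /orP [/eqP -> | He] /norP [Nji Njs] //.
by rewrite (IH _ He Njs) flipE (negbTE Nji).
Qed.

Lemma zip_scanl_flip a s :
  zip (a :: scanl flip a s) (scanl flip a s) = [seq (e.1, flip e.1 e.2) | e <- flip_edges a s].
Proof. by elim: s a => [|i s IH] a //=; rewrite IH. Qed.

Definition agree R a b := forall i, R i -> a i = b i.

Lemma agree_refl R a : agree R a a.
Proof. by []. Qed.

Lemma agree_trans R a b c : agree R a b -> agree R a c -> agree R b c.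
Proof. by move=> Hab Hac i Ri; rewrite -Hab // Hac. Qed.

(* The monotone walk from [a] towards [b] flipping, in increasing order, the
   coordinates of [R] on which they differ; it omits its start [a]. *)
Definition walk_dirs R a b := [seq i <- enum 'I_n | R i && (a i != b i)].
Definition walk R a b := scanl flip a (walk_dirs R a b).
Definition walk_edges R a b := flip_edges a (walk_dirs R a b).

Lemma walk_dirs_uniq R a b : uniq (walk_dirs R a b).
Proof. by rewrite filter_uniq // enum_uniq. Qed.

Lemma mem_walk_dirs R a b i : (i \in walk_dirs R a b) = R i && (a i != b i).
Proof. by rewrite mem_filter mem_enum andbT. Qed.

Lemma walk_fixed R a b w i : w \in walk R a b -> a i = b i -> w i = a i.
Proof. by move=> Hw Eab; apply: (scanl_flip_notin Hw); rewrite mem_walk_dirs Eab eqxx andbF. Qed.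

Lemma walk_moved R a b w : w \in walk R a b -> exists i, [/\ R i, a i != b i & w i != a i].
Proof.
move=> /(scanl_flip_moved (walk_dirs_uniq R a b)) [i].
by rewrite mem_walk_dirs => /andP [Ri Nab] Nw; exists i.
Qed.

Lemma walk_not_agree R a b w : w \in walk R a b -> ~ agree R w a.
Proof. by case/walk_moved => i [Ri _ /eqP Nwa] /(_ i Ri). Qed.

Lemma walk_uniq R a b : uniq (walk R a b).
Proof. exact/scanl_flip_uniq/walk_dirs_uniq. Qed.

Lemma last_walk R a b : (forall i, ~~ R i -> a i = b i) -> last a (walk R a b) = b.
Proof.
move=> Eout; rewrite last_scanl_flip foldl_flip ?walk_dirs_uniq //.
apply/ffunP => j; rewrite ffunE mem_walk_dirs.
by case Rj: (R j) => /=; [case: (a j) (b j) => [] [] | rewrite Eout ?Rj].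
Qed.

Lemma mem_last_walk R a b : (forall i, ~~ R i -> a i = b i) -> a != b -> b \in walk R a b.
Proof.
move=> Eout Nab; have := mem_last a (walk R a b).
by rewrite last_walk // inE eq_sym (negbTE Nab).
Qed.

Lemma walk_one_coord R a b c w : w \in walk R a b -> (forall i, i != c -> a i = b i) -> w = b.
Proof.
move=> Hw Ec; have [i [_ Nab Nwa]] := walk_moved Hw.
have ic : i = c by apply/eqP; apply: contraNT Nab => /Ec ->.
subst i; apply/ffunP => j; case: (eqVneq j c) => [-> | Njc].
  by move: Nab Nwa; case: (a c) (b c) (w c) => [] [] [].
by rewrite (walk_fixed Hw (Ec _ Njc)) Ec.
Qed.

Lemma walk_edges_fixed R a b e i : e \in walk_edges R a b -> a i = b i -> e.1 i = a i.
Proof. by move=> He Eab; apply: (flip_edges_notin He); rewrite mem_walk_dirs Eab eqxx andbF. Qed.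

Lemma walk_edges_dir R a b e : e \in walk_edges R a b -> R e.2 /\ a e.2 != b e.2.
Proof.
move=> He; have : e.2 \in [seq e.2 | e <- walk_edges R a b] by apply: map_f.
by rewrite flip_edges_dirs mem_walk_dirs => /andP.
Qed.

(* A piece [(R, a, b)] stands for [walk R a b]; a chain of pieces starting at
   [x] is well formed when each piece starts where the previous one ends and
   only moves coordinates of its region. *)
Definition piece := (pred 'I_n * V * V)%type.
Definition piece_walk (pc : piece) := walk pc.1.1 pc.1.2 pc.2.
Definition piece_edges (pc : piece) := walk_edges pc.1.1 pc.1.2 pc.2.

Fixpoint chain_ok x (pcs : seq piece) : Prop :=
  if pcs is pc :: pcs' then
    [/\ pc.1.2 = x, forall i, ~~ pc.1.1 i -> pc.1.2 i = pc.2 i & chain_ok pc.2 pcs']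
  else True.

Fixpoint chain_end x (pcs : seq piece) : V :=
  if pcs is pc :: pcs' then chain_end pc.2 pcs' else x.

Lemma chain_ok_cat x s1 s2 :
  chain_ok x s1 -> chain_ok (chain_end x s1) s2 -> chain_ok x (s1 ++ s2).
Proof. by elim: s1 x => [|pc s1 IH] x //= [? ? ?] ?; split => //; apply: IH. Qed.

Lemma chain_end_cat x s1 s2 : chain_end x (s1 ++ s2) = chain_end (chain_end x s1) s2.
Proof. by elim: s1 x => [|pc s1 IH] x //=. Qed.

Lemma chain_path x pcs : chain_ok x pcs ->
  path (@cube_adj n) x (flatten (map piece_walk pcs)) /\
  last x (flatten (map piece_walk pcs)) = chain_end x pcs.
Proof.
elim: pcs x => [|[[R a] b] pcs IH] x //= [/= -> Eout Hc].
have [IH1 IH2] := IH _ Hc.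
by rewrite cat_path last_cat path_scanl_flip /= [last x _]last_walk.
Qed.

Lemma chain_zip x pcs : chain_ok x pcs ->
  zip (x :: flatten (map piece_walk pcs)) (flatten (map piece_walk pcs)) =
  [seq (e.1, flip e.1 e.2) | e <- flatten (map piece_edges pcs)].
Proof.
elim: pcs x => [|[[R a] b] pcs IH] x //= [/= -> Eout Hc].
by rewrite zip_cons_cat map_cat [last x _]last_walk // IH // zip_scanl_flip.
Qed.

Lemma uniq_cycle_colours m (col : V -> V -> 'I_m) x c : last x c = x ->
  uniq (cycle_colours col c) = uniq [seq col e.1 e.2 | e <- zip (x :: c) c].
Proof.
case: c => [|a s] //= Ex; rewrite /cycle_colours rot1_cons zip_cons_rcons Ex.
by rewrite map_rcons rcons_uniq /=.
Qed.

End CubeWalks.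

(* The colour of an edge of [Q_n] is its direction together with the first
   [t] coordinates of its endpoints, the direction itself cleared. *)
Section PrefixColouring.
Variables (n t : nat) (le_tn : t <= n) (i0 : 'I_n).
Local Notation V := (cube_vertex n).

Definition colour_key := ('I_n * {ffun 'I_t -> bool})%type.

Definition edge_dir (x y : V) : 'I_n := odflt i0 [pick i | x i != y i].

Definition edge_key (x y : V) : colour_key :=
  (edge_dir x y, [ffun j : 'I_t =>
     [&& widen_ord le_tn j != edge_dir x y, x (widen_ord le_tn j) & y (widen_ord le_tn j)]]).

Definition prefix_colour (x y : V) : 'I_#|{: colour_key}| := enum_rank (edge_key x y).

Lemma edge_dirC x y : edge_dir x y = edge_dir y x.
Proof. by rewrite /edge_dir (eq_pick (_ : _ =1 (fun i => y i != x i))) // => i; rewrite eq_sym. Qed.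

Lemma prefix_colourC x y : prefix_colour x y = prefix_colour y x.
Proof.
rewrite /prefix_colour /edge_key edge_dirC; congr (enum_rank (_, _)).
by apply/ffunP => j; rewrite !ffunE [x _ && _]andbC.
Qed.

Definition flip_key (e : V * 'I_n) : colour_key :=
  (e.2, [ffun j : 'I_t => (widen_ord le_tn j != e.2) && e.1 (widen_ord le_tn j)]).

Lemma edge_dir_flip w i : edge_dir w (flip w i) = i.
Proof.
rewrite /edge_dir; case: pickP => [j | Nflip] /=.
  by rewrite flipE; case: (eqVneq j i) => [-> //|]; rewrite eqxx.
by move: (Nflip i); rewrite flipE eqxx; case: (w i).
Qed.

Lemma prefix_colour_flip w i : prefix_colour w (flip w i) = enum_rank (flip_key (w, i)).
Proof.
rewrite /prefix_colour /edge_key /flip_key edge_dir_flip; congr (enum_rank (_, _)).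
apply/ffunP => j; rewrite !ffunE /=.
by case: eqVneq => //= _; rewrite andbb.
Qed.

Lemma flip_key_inj e e' : flip_key e = flip_key e' ->
  e.2 = e'.2 /\ forall j : 'I_n, j < t -> j != e.2 -> e.1 j = e'.1 j.
Proof.
case: e e' => [w i] [w' i'] [/= <- Ekey]; split => // j lt_jt Nji.
have := congr1 (fun f : {ffun 'I_t -> bool} => f (Ordinal lt_jt)) Ekey; rewrite !ffunE.
have -> : widen_ord le_tn (Ordinal lt_jt) = j by apply: val_inj.
by rewrite Nji.
Qed.

End PrefixColouring.


(* The coordinates split into the tag block P = [0, 3k), the block
   Q° = [3k, 5k), the switch coordinate y = 5k and the rest R; Q = Q° + y.
   Colours see P, Q° and y: the first [key_len k] coordinates. *)
Definition blockP k := 3 * k.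
Definition blockQ k := 2 * k.
Definition key_len k := (blockP k + blockQ k).+1.

Section Tour.
Variables (k n : nat).
Hypothesis k_gt2 : 2 < k.
Hypothesis le_key_n : key_len k <= n.
Local Notation V := (cube_vertex n).
Local Notation p := (blockP k).
Local Notation q := (blockQ k).
Let k_gt0 : 0 < k := ltn_trans (isT : 0 < 2) k_gt2.

Definition ycoord : 'I_n := Ordinal le_key_n.

Definition inP : pred 'I_n := fun i => i < p.
Definition inQo : pred 'I_n := fun i => p <= i < p + q.
Definition isY : pred 'I_n := fun i => nat_of_ord i == p + q.
Definition inR : pred 'I_n := fun i => p + q < i.
Definition inQ : pred 'I_n := fun i => p <= i <= p + q.

Variant coord_spec (i : nat) : bool -> bool -> bool -> bool -> bool -> Set :=
| CoordP of i < p : coord_spec i true false false false false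
| CoordQo of p <= i & i < p + q : coord_spec i false true false false true
| CoordY of i = p + q : coord_spec i false false true false true
| CoordR of p + q < i : coord_spec i false false false true false.

Lemma coordP i : coord_spec i (i < p) (p <= i < p + q) (i == p + q) (p + q < i) (p <= i <= p + q).
Proof.
case: (ltnP i p) => [lt_ip | le_pi] /=.
  have -> : (i == p + q) = false by lia.
  have -> : (p + q < i) = false by lia.
  by constructor.
case: (ltnP i (p + q)) => [lt_i | le_i] /=.
  have -> : (i == p + q) = false by lia.
  have -> : (i <= p + q) = true by lia.
  have -> : (p + q < i) = false by lia.
  by constructor.
case: (eqVneq i (p + q)) => [-> | ne_i] /=; first by rewrite leqnn ltnn; constructor.
have -> : (p + q < i) = true by lia.
have -> : (i <= p + q) = false by lia.
by constructor; lia.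
Qed.

Lemma isY_ycoord (i : 'I_n) : isY i -> i = ycoord.
Proof. by move/eqP => Ei; apply: val_inj. Qed.

Lemma inQ_split (i : 'I_n) : inQ i -> inQo i \/ i = ycoord.
Proof.
rewrite /inQ /inQo => Qi; have [lt_i | le_i] := ltnP i (p + q); first by left; lia.
by right; apply: val_inj => /=; lia.
Qed.

Lemma inQ_ycoord : inQ ycoord. Proof. by rewrite /inQ /= leq_addr leqnn. Qed.
Lemma ycoord_notin_P : ~~ inP ycoord. Proof. by rewrite /inP /=; lia. Qed.
Lemma ycoord_notin_Qo : ~~ inQo ycoord. Proof. by rewrite /inQo /=; lia. Qed.
Lemma ycoord_notin_R : ~~ inR ycoord. Proof. by rewrite /inR /=; lia. Qed.
Lemma inP_notin_Q i : inP i -> ~~ inQ i. Proof. by rewrite /inP /inQ; lia. Qed.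
Lemma inR_notin_Qo i : inR i -> ~~ inQo i. Proof. by rewrite /inR /inQo; lia. Qed.

Lemma agreeQ_y (a b : V) : agree inQ a b -> a ycoord = b ycoord.
Proof. by move=> Eab; rewrite Eab ?inQ_ycoord. Qed.

Lemma agreeQ_Qo (a b : V) : agree inQ a b -> agree inQo a b.
Proof. by move=> Eab i Qi; apply: Eab; move: Qi; rewrite /inQ /inQo; lia. Qed.

Lemma agreeQo_Q (a b : V) : agree inQo a b -> a ycoord = b ycoord -> agree inQ a b.
Proof. by move=> Eab Ey i /inQ_split [Qi | ->]; [apply: Eab |]. Qed.

Definition assemble (vP vQ vY vR : V) : V :=
  [ffun i : 'I_n => if i < p then vP i else if p <= i < p + q then vQ i
                    else if nat_of_ord i == p + q then vY i else vR i].

Lemma assembleP vP vQ vY vR (i : 'I_n) : i < p -> assemble vP vQ vY vR i = vP i.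
Proof. by move=> lt_ip; rewrite ffunE lt_ip. Qed.

Lemma assembleQ vP vQ vY vR (i : 'I_n) : p <= i < p + q -> assemble vP vQ vY vR i = vQ i.
Proof. by move=> Qi; rewrite ffunE Qi (_ : i < p = false) //; lia. Qed.

Lemma assembleY vP vQ vY vR : assemble vP vQ vY vR ycoord = vY ycoord.
Proof. by rewrite ffunE /= ltnNge leq_addr ltnn andbF eqxx. Qed.

Lemma assembleR vP vQ vY vR (i : 'I_n) : p + q < i -> assemble vP vQ vY vR i = vR i.
Proof. by rewrite ffunE; case: coordP. Qed.

Definition cube0 : V := [ffun => false].

(* The tour visits the targets [xs] in order; segment [j] goes from [src j]
   to [dst j] through the waypoints below, written [P | Q° | y | R].  The
   P-tags [tagG j], [tagG' j] (a target with one P-coordinate flipped) and the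
   Q-tags [tagQ j] are pairwise distinct and differ from all targets on their
   block, so a vertex or an edge of the tour reveals its segment; the switch
   [y = 0] marks the legs where Q° is rewritten. *)
Variables (x0 : V) (xs : seq V) (tag_dir : nat -> 'I_n) (tagQ : nat -> V).
Hypothesis size_xs : size xs = k.
Hypothesis uniq_xs : uniq xs.
Hypothesis tag_dir_inP : forall j, tag_dir j < p.

Definition src j := nth x0 xs j.
Definition dst j := nth x0 xs (j.+1 %% k).
Definition tagG j := flip (src j) (tag_dir j).
Definition tagG' j := flip (dst j) (tag_dir (k + j)).
Definition tagP idx := if idx < k then tagG idx else tagG' (idx - k).

Hypothesis tagP_inj :
  forall j1 j2, j1 < 2 * k -> j2 < 2 * k -> agree inP (tagP j1) (tagP j2) -> j1 = j2.
Hypothesis tagP_fresh : forall j x, j < 2 * k -> x \in xs -> ~ agree inP (tagP j) x.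
Hypothesis tagQ_y : forall j, tagQ j ycoord = true.
Hypothesis tagQ_inj : forall j1 j2, j1 < k -> j2 < k -> agree inQ (tagQ j1) (tagQ j2) -> j1 = j2.
Hypothesis tagQ_fresh : forall j x, j < k -> x \in xs -> ~ agree inQ (tagQ j) x.

Lemma src_mem j : j < k -> src j \in xs.
Proof. by move=> lt_jk; apply: mem_nth; rewrite size_xs. Qed.

Lemma dst_mem j : dst j \in xs.
Proof. by apply: mem_nth; rewrite size_xs ltn_mod. Qed.

Lemma dst_inj j j' : j < k -> j' < k -> dst j = dst j' -> j = j'.
Proof.
move=> lt_j lt_j' /eqP; rewrite /dst nth_uniq ?size_xs ?ltn_mod // => /eqP E.
have modS a : a < k -> a.+1 %% k = if a.+1 == k then 0 else a.+1.
  by move=> lt_a; case: eqVneq => [-> | ne]; [rewrite modnn | rewrite modn_small //; lia].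
by move: E; rewrite !modS //; case: (eqVneq j.+1 k); case: (eqVneq j'.+1 k); lia.
Qed.

Lemma tagP_G j : j < k -> tagP j = tagG j.
Proof. by rewrite /tagP => ->. Qed.

Lemma tagP_G' j : tagP (k + j) = tagG' j.
Proof. by rewrite /tagP ltnNge leq_addr /= addKn. Qed.

Lemma agreeG_inj a j j' :
  j < k -> j' < k -> agree inP a (tagG j) -> agree inP a (tagG j') -> j = j'.
Proof.
move=> lt_j lt_j' Aj Aj'; apply: tagP_inj; try lia.
by rewrite !tagP_G //; apply: agree_trans Aj Aj'.
Qed.

Lemma agreeG'_inj a j j' :
  j < k -> j' < k -> agree inP a (tagG' j) -> agree inP a (tagG' j') -> j = j'.
Proof.
move=> lt_j lt_j' Aj Aj'; have := @tagP_inj (k + j) (k + j'); rewrite !tagP_G'.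
by move=> /(_ _ _ (agree_trans Aj Aj')); lia.
Qed.

Lemma agreeG_G'F a j j' :
  j < k -> j' < k -> agree inP a (tagG j) -> agree inP a (tagG' j') -> False.
Proof.
move=> lt_j lt_j' Aj Aj'; have := @tagP_inj j (k + j'); rewrite tagP_G // tagP_G'.
by move=> /(_ _ _ (agree_trans Aj Aj')); lia.
Qed.

Lemma agreeG_targetF a j x : j < k -> x \in xs -> agree inP a (tagG j) -> agree inP a x -> False.
Proof.
move=> lt_j xs_x Aj Ax; apply: (@tagP_fresh j x) => //; first lia.
by rewrite tagP_G //; apply: agree_trans Aj Ax.
Qed.

Lemma agreeG'_targetF a j x : j < k -> x \in xs -> agree inP a (tagG' j) -> agree inP a x -> False.
Proof.
move=> lt_j xs_x Aj Ax; apply: (@tagP_fresh (k + j) x) => //; first lia.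
by rewrite tagP_G'; apply: agree_trans Aj Ax.
Qed.

Lemma agreeQ_inj a j j' :
  j < k -> j' < k -> agree inQ a (tagQ j) -> agree inQ a (tagQ j') -> j = j'.
Proof. by move=> lt_j lt_j' Aj Aj'; apply: tagQ_inj => //; apply: agree_trans Aj Aj'. Qed.

Lemma agreeQ_targetF a j x : j < k -> x \in xs -> agree inQ a (tagQ j) -> agree inQ a x -> False.
Proof. by move=> lt_j xs_x Aj Ax; apply: (@tagQ_fresh j x) => //; apply: agree_trans Aj Ax. Qed.

Lemma agreeQ_tag_y a j : agree inQ a (tagQ j) -> a ycoord = true.
Proof. by move=> /agreeQ_y ->. Qed.

Definition waypoint j r : V :=
  match r with
  | 0 => src j
  | 1 => assemble (tagG j) (src j) (src j) (src j)
  | 2 => assemble (tagG j) (src j) (src j) (dst j)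
  | 3 => assemble (tagG j) (src j) cube0 (dst j)
  | 4 => assemble (tagG j) (tagQ j) cube0 (dst j)
  | 5 => assemble (tagG j) (tagQ j) (tagQ j) (dst j)
  | 6 => assemble (tagG' j) (tagQ j) (tagQ j) (dst j)
  | 7 => assemble (tagG' j) (tagQ j) cube0 (dst j)
  | 8 => assemble (tagG' j) (dst j) cube0 (dst j)
  | 9 => assemble (tagG' j) (dst j) (dst j) (dst j)
  | _ => dst j
  end.

Definition leg_region r : pred 'I_n :=
  match r with
  | 0 => inP | 1 => inR | 2 => isY | 3 => inQo | 4 => isY
  | 5 => inP | 6 => isY | 7 => inQo | 8 => isY | _ => inP
  end.

Definition leg j r : piece n := (leg_region r, waypoint j r, waypoint j r.+1).
Definition segment j := map (leg j) (iota 0 10).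
Arguments segment : simpl never.

Lemma waypoint1E j i : i != tag_dir j -> waypoint j 1 i = src j i.
Proof.
move=> Ni; rewrite /= ffunE; case: ifP => _; first by rewrite /tagG flipE (negbTE Ni).
by case: (_ && _) => //; case: (_ == _).
Qed.

Lemma waypoint9E j i : i != tag_dir (k + j) -> waypoint j 9 i = dst j i.
Proof.
move=> Ni; rewrite /= ffunE; case: ifP => _; first by rewrite /tagG' flipE (negbTE Ni).
by case: (_ && _) => //; case: (_ == _).
Qed.

Lemma segment_chain j : chain_ok (src j) (segment j) /\ chain_end (src j) (segment j) = dst j.
Proof.
rewrite /segment; split => //=.
do 10! (split; [done | move=> i; rewrite /inP /inQo /isY /inR /assemble !ffunE; case: coordP => // | ]).
done.
Qed.

Definition segments m := flatten [seq segment j | j <- iota 0 m].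

Lemma segments_chain m :
  m < k -> chain_ok (src 0) (segments m.+1) /\ chain_end (src 0) (segments m.+1) = dst m.
Proof.
rewrite /segments; elim: m => [|m IH] lt_mk; first by rewrite /= ?cats0; apply: segment_chain.
have [chain_m end_m] := IH (ltnW lt_mk).
have dst_src : dst m = src m.+1 by rewrite /dst /src modn_small.
have [chain_seg end_seg] := segment_chain m.+1.
have -> : flatten [seq segment j | j <- iota 0 m.+2] =
          flatten [seq segment j | j <- iota 0 m.+1] ++ segment m.+1.
  by rewrite -[m.+2]addn1 iotaD map_cat flatten_cat /= ?cats0.
rewrite chain_end_cat end_m dst_src; split => //.
by apply: chain_ok_cat; rewrite // end_m dst_src.
Qed.

Definition leg_labels := [seq (j, r) | j <- iota 0 k, r <- iota 0 10].
Definition tour_legs := [seq leg l.1 l.2 | l <- leg_labels].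

Lemma mem_leg_labels j r : ((j, r) \in leg_labels) = (j < k) && (r < 10).
Proof.
apply/allpairsP/andP => [[[j' r'] [lt_j lt_r [-> ->]]] | [lt_j lt_r]].
  by move: lt_j lt_r; rewrite !mem_iota /=; lia.
by exists (j, r); rewrite !mem_iota.
Qed.

Lemma leg_labels_uniq : uniq leg_labels.
Proof. by apply: allpairs_uniq; rewrite ?iota_uniq // => -[? ?] [? ?]. Qed.

Lemma tour_legs_chain : chain_ok (src 0) tour_legs /\ chain_end (src 0) tour_legs = src 0.
Proof.
have -> : tour_legs = segments k by rewrite /tour_legs map_flatten -map_comp.
have := @segments_chain k.-1; rewrite prednK // => -[// | chain_legs ->].
by rewrite /dst /src prednK // modnn.
Qed.

Definition tour := flatten (map (@piece_walk n) tour_legs).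
Definition tour_edges := flatten (map (@piece_edges n) tour_legs).

Definition leg_vertex j r (w : V) : Prop :=
  match r with
  | 0 => [/\ agree inP w (tagG j), agree inQ w (src j) & agree inR w (src j)]
  | 1 => [/\ agree inP w (tagG j), agree inQ w (src j) & ~ agree inR w (src j)]
  | 2 => [/\ agree inP w (tagG j), w ycoord = false, agree inQo w (src j) & src j ycoord = true]
  | 3 => [/\ agree inP w (tagG j), w ycoord = false & ~ agree inQo w (src j)]
  | 4 => agree inP w (tagG j) /\ agree inQ w (tagQ j)
  | 5 => agree inQ w (tagQ j) /\ ~ agree inP w (tagG j)
  | 6 => [/\ agree inP w (tagG' j), w ycoord = false & agree inQo w (tagQ j)]
  | 7 => [/\ agree inP w (tagG' j), w ycoord = false & ~ agree inQo w (tagQ j)]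
  | 8 => [/\ agree inP w (tagG' j), agree inQ w (dst j) & dst j ycoord = true]
  | _ => w = dst j
  end.

Lemma walk_leg_vertex_lo j r w : r < 5 -> w \in piece_walk (leg j r) -> leg_vertex j r w.
Proof.
rewrite /piece_walk /leg; case: r => [|[|[|[|[|r]]]]] // _ Hw /=.
- have -> : w = waypoint j 1 by apply: (walk_one_coord Hw (c := tag_dir j)) => i /waypoint1E.
  split=> i; [exact: assembleP | case/inQ_split => [? | ->] | exact: assembleR].
  + exact: assembleQ.
  + exact: assembleY.
- split.
  + by move=> i Pi; rewrite (walk_fixed Hw) /= !assembleP.
  + by move=> i /inQ_split [Qi | ->]; rewrite (walk_fixed Hw) /= ?assembleY // !assembleQ.
  + by move=> A; apply: (walk_not_agree Hw) => i Ri; rewrite A // assembleR.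
- have [y [/isY_ycoord -> Ny Nwy]] := walk_moved Hw; move: Ny Nwy; rewrite /= !assembleY ffunE.
  case: (src j ycoord) (w ycoord) => [] [] // _ _.
  split=> //; first by move=> i Pi; rewrite (walk_fixed Hw) /= !assembleP.
  by move=> i Qi; rewrite (walk_fixed Hw) /= !assembleQ.
- split.
  + by move=> i Pi; rewrite (walk_fixed Hw) /= !assembleP.
  + by rewrite (walk_fixed Hw) /= !assembleY ffunE.
  + by move=> A; apply: (walk_not_agree Hw) => i Qi; rewrite A // assembleQ.
- have [y [/isY_ycoord -> _ Nwy]] := walk_moved Hw; move: Nwy; rewrite /= !assembleY ffunE => Nwy.
  split; first by move=> i Pi; rewrite (walk_fixed Hw) /= !assembleP.
  move=> i /inQ_split [Qi | ->]; last by rewrite tagQ_y; case: (w _) Nwy.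
  by rewrite (walk_fixed Hw) /= !assembleQ.
Qed.

Lemma walk_leg_vertex_hi j r w : 5 <= r < 10 -> w \in piece_walk (leg j r) -> leg_vertex j r w.
Proof.
rewrite /piece_walk /leg; case: r => [|[|[|[|[|[|[|[|[|[|r]]]]]]]]]] // _ Hw /=.
- split.
  + by move=> i /inQ_split [Qi | ->]; rewrite (walk_fixed Hw) /= ?assembleY // !assembleQ.
  + by move=> A; apply: (walk_not_agree Hw) => i Pi; rewrite A // assembleP.
- have [y [/isY_ycoord -> _ Nwy]] := walk_moved Hw; move: Nwy; rewrite /= !assembleY => Nwy.
  split; first by move=> i Pi; rewrite (walk_fixed Hw) /= !assembleP.
  + by move: Nwy; rewrite tagQ_y; case: (w _).
  + by move=> i Qi; rewrite (walk_fixed Hw) /= !assembleQ.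
- split.
  + by move=> i Pi; rewrite (walk_fixed Hw) /= !assembleP.
  + by rewrite (walk_fixed Hw) /= !assembleY ffunE.
  + by move=> A; apply: (walk_not_agree Hw) => i Qi; rewrite A // assembleQ.
- have [y [/isY_ycoord -> Ny Nwy]] := walk_moved Hw; move: Ny Nwy; rewrite /= !assembleY ffunE.
  move=> Ny Nwy; have dst_y : dst j ycoord = true by case: (dst j ycoord) Ny.
  split=> //; first by move=> i Pi; rewrite (walk_fixed Hw) /= !assembleP.
  move=> i /inQ_split [Qi | ->]; last by rewrite dst_y; case: (w _) Nwy.
  by rewrite (walk_fixed Hw) /= !assembleQ.
- by apply: (walk_one_coord Hw (c := tag_dir (k + j))) => i /waypoint9E.
Qed.

Lemma walk_leg_vertex j r w : r < 10 -> w \in piece_walk (leg j r) -> leg_vertex j r w.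
Proof.
by case: (ltnP r 5) => [lt_r5 _ | le5r lt_r]; [apply: walk_leg_vertex_lo | apply: walk_leg_vertex_hi; lia].
Qed.

Definition vertex_phase r := if r < 5 then 0 else if r == 5 then 1 else if r < 9 then 2 else 3.

Lemma leg_vertex_phase j r w : j < k -> r < 10 -> leg_vertex j r w ->
  [\/ [/\ vertex_phase r = 0, agree inP w (tagG j)
        & [\/ w ycoord = false, agree inQ w (tagQ j) | exists2 x, x \in xs & agree inQ w x]],
      [/\ vertex_phase r = 1, agree inQ w (tagQ j) & ~ agree inP w (tagG j)],
      [/\ vertex_phase r = 2, agree inP w (tagG' j)
        & w ycoord = false \/ exists2 x, x \in xs & agree inQ w x]
    | vertex_phase r = 3 /\ w = dst j].
Proof.
move=> lt_jk; case: r => [|[|[|[|[|[|[|[|[|[|r]]]]]]]]]] //= _.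
- by case=> A B C; apply: Or41; split => //; apply: Or33; exists (src j); rewrite ?src_mem.
- by case=> A B C; apply: Or41; split => //; apply: Or33; exists (src j); rewrite ?src_mem.
- by case=> A B C D; apply: Or41; split => //; apply: Or31.
- by case=> A B C; apply: Or41; split => //; apply: Or31.
- by case=> A B; apply: Or41; split => //; apply: Or32.
- by case=> A B; apply: Or42.
- by case=> A B C; apply: Or43; split => //; left.
- by case=> A B C; apply: Or43; split => //; left.
- by case=> A B C; apply: Or43; split => //; right; exists (dst j); rewrite ?dst_mem.
- by move=> ->; apply: Or44.
Qed.

(* The tag carried on P (resp. on Q, in the phase where P is being rewritten)
   determines the segment. *)
Lemma leg_vertex_segment j j' r r' w : j < k -> j' < k -> r < 10 -> r' < 10 ->
  leg_vertex j r w -> leg_vertex j' r' w -> j = j' /\ vertex_phase r = vertex_phase r'.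
Proof.
move=> lt_j lt_j' lt_r lt_r' D D'.
case: (leg_vertex_phase lt_j lt_r D) => [[-> A1 B1] | [-> A1 B1] | [-> A1 B1] | [-> E1]];
case: (leg_vertex_phase lt_j' lt_r' D') => [[-> A2 B2] | [-> A2 B2] | [-> A2 B2] | [-> E2]].
all: try (by split => //; apply: agreeG_inj A1 A2).
all: try (by split => //; apply: agreeQ_inj A1 A2).
all: try (by split => //; apply: agreeG'_inj A1 A2).
all: try (by split => //; apply: dst_inj; rewrite // -E1 -E2).
all: exfalso; try subst w.
all: try (by apply: agreeG_G'F A1 A2).
all: try (by apply: agreeG_G'F A2 A1).
all: try (by apply: agreeG_targetF (dst_mem _) A1 (agree_refl _)).
all: try (by apply: agreeG_targetF (dst_mem _) A2 (agree_refl _)).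
all: try (by apply: agreeG'_targetF (dst_mem _) A1 (agree_refl _)).
all: try (by apply: agreeG'_targetF (dst_mem _) A2 (agree_refl _)).
all: try (by apply: agreeQ_targetF (dst_mem _) A1 (agree_refl _)).
all: try (by apply: agreeQ_targetF (dst_mem _) A2 (agree_refl _)).
all: try (case: B1 => [Y | Q | [x xs_x Q]]; [by move: (agreeQ_tag_y A2); rewrite Y
   | by have E := agreeQ_inj lt_j lt_j' Q A2; subst j'; apply: B2 A1 | exact: agreeQ_targetF xs_x A2 Q]).
all: try (case: B2 => [Y | Q | [x xs_x Q]]; [by move: (agreeQ_tag_y A1); rewrite Y
   | by have E := agreeQ_inj lt_j' lt_j Q A1; subst j'; apply: B1 A2 | exact: agreeQ_targetF xs_x A1 Q]).
all: try (case: B1 => [Y | [x xs_x Q]]; [by move: (agreeQ_tag_y A2); rewrite Y | exact: agreeQ_targetF xs_x A2 Q]).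
all: try (case: B2 => [Y | [x xs_x Q]]; [by move: (agreeQ_tag_y A1); rewrite Y | exact: agreeQ_targetF xs_x A1 Q]).
Qed.

Lemma agreeQ_switchF w a : agree inQ w a -> w ycoord = false -> a ycoord = true -> False.
Proof. by move/agreeQ_y => -> ->. Qed.

(* Within a segment and a phase, legs are told apart by whether a block has
   already been moved, by the switch [y], or by the freshness of the Q-tag. *)
Lemma leg_vertex_index j r r' w : j < k -> r < 10 -> r' < 10 ->
  leg_vertex j r w -> leg_vertex j r' w -> vertex_phase r = vertex_phase r' -> r = r'.
Proof.
move=> lt_jk.
case: r => [|[|[|[|[|[|[|[|[|[|r]]]]]]]]]] //; case: r' => [|[|[|[|[|[|[|[|[|[|r']]]]]]]]]] //= _ _.
all: move=> D1 D2 _; exfalso.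
all: repeat match goal with
  | H : [/\ _, _, _ & _] |- _ => case: H => ? ? ? ?
  | H : [/\ _, _ & _] |- _ => case: H => ? ? ?
  | H : _ /\ _ |- _ => case: H => ? ?
  end.
all: try match goal with
  | A : agree ?R ?w ?a, N : ~ agree ?R ?w ?a |- _ => exact: (N A)
  | A : agree inQ ?w ?a, N : ~ agree inQo ?w ?a |- _ => exact: (N (agreeQ_Qo A))
  end.
all: try match goal with
  | A : agree inQ _ _ |- _ => solve [apply: (agreeQ_switchF A) => //; apply: tagQ_y]
  end.
all: match goal with
  | A : agree inQ ?w (src ?j), B : agree inQ ?w (tagQ ?j) |- _ =>
      exact: (agreeQ_targetF lt_jk (src_mem lt_jk) B A)
  end.
Qed.

Lemma tour_uniq : uniq tour.
Proof.
rewrite /tour /tour_legs -map_comp.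
apply: uniq_flatten_map; [exact: leg_labels_uniq | by move=> l _; apply: walk_uniq |].
move=> [j r] [j' r'] w; rewrite !mem_leg_labels => /andP [lt_j lt_r] /andP [lt_j' lt_r'] W W'.
have D := walk_leg_vertex lt_r W; have D' := walk_leg_vertex lt_r' W'.
have [E Ephase] := leg_vertex_segment lt_j lt_j' lt_r lt_r' D D'; subst j'.
by rewrite (leg_vertex_index lt_j lt_r lt_r' D D' Ephase).
Qed.

Definition leg_edge j r (e : V * 'I_n) : Prop :=
  match r with
  | 0 => e.2 = tag_dir j /\ (forall i, i != tag_dir j -> e.1 i = src j i)
  | 1 => [/\ inR e.2, agree inP e.1 (tagG j) & agree inQ e.1 (src j)]
  | 2 => [/\ e.2 = ycoord, agree inP e.1 (tagG j), agree inQo e.1 (src j) & src j ycoord = true]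
  | 3 => [/\ inQo e.2, agree inP e.1 (tagG j) & e.1 ycoord = false]
  | 4 => [/\ e.2 = ycoord, agree inP e.1 (tagG j) & agree inQo e.1 (tagQ j)]
  | 5 => inP e.2 /\ agree inQ e.1 (tagQ j)
  | 6 => [/\ e.2 = ycoord, agree inP e.1 (tagG' j) & agree inQo e.1 (tagQ j)]
  | 7 => [/\ inQo e.2, agree inP e.1 (tagG' j) & e.1 ycoord = false]
  | 8 => [/\ e.2 = ycoord, agree inP e.1 (tagG' j), agree inQo e.1 (dst j) & dst j ycoord = true]
  | _ => e.2 = tag_dir (k + j) /\ (forall i, i != tag_dir (k + j) -> e.1 i = dst j i)
  end.

Lemma walk_leg_edge_lo j r e : r < 5 -> e \in piece_edges (leg j r) -> leg_edge j r e.
Proof.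
rewrite /piece_edges /leg; case: r => [|[|[|[|[|r]]]]] // _ He /=.
all: have [Rd Nd] := walk_edges_dir He.
- split; first by apply/eqP; apply: contraNT Nd => /waypoint1E /= ->; rewrite eqxx.
  by move=> i /waypoint1E /= Ei; rewrite (walk_edges_fixed He) // Ei.
- split => //.
  + by move=> i Pi; rewrite (walk_edges_fixed He) /= !assembleP.
  + by move=> i /inQ_split [Qi | ->]; rewrite (walk_edges_fixed He) /= ?assembleY // !assembleQ.
- move: Nd; rewrite (isY_ycoord Rd) /= !assembleY ffunE => Ny.
  split => //; last by case: (src j ycoord) Ny.
  + by move=> i Pi; rewrite (walk_edges_fixed He) /= !assembleP.
  + by move=> i Qi; rewrite (walk_edges_fixed He) /= !assembleQ.
- split => //.
  + by move=> i Pi; rewrite (walk_edges_fixed He) /= !assembleP.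
  + by rewrite (walk_edges_fixed He) /= !assembleY ffunE.
- split; first exact: isY_ycoord.
  + by move=> i Pi; rewrite (walk_edges_fixed He) /= !assembleP.
  + by move=> i Qi; rewrite (walk_edges_fixed He) /= !assembleQ.
Qed.

Lemma walk_leg_edge_hi j r e : 5 <= r < 10 -> e \in piece_edges (leg j r) -> leg_edge j r e.
Proof.
rewrite /piece_edges /leg; case: r => [|[|[|[|[|[|[|[|[|[|r]]]]]]]]]] // _ He /=.
all: have [Rd Nd] := walk_edges_dir He.
- split => //.
  by move=> i /inQ_split [Qi | ->]; rewrite (walk_edges_fixed He) /= ?assembleY // !assembleQ.
- split; first exact: isY_ycoord.
  + by move=> i Pi; rewrite (walk_edges_fixed He) /= !assembleP.
  + by move=> i Qi; rewrite (walk_edges_fixed He) /= !assembleQ.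
- split => //.
  + by move=> i Pi; rewrite (walk_edges_fixed He) /= !assembleP.
  + by rewrite (walk_edges_fixed He) /= !assembleY ffunE.
- move: Nd; rewrite (isY_ycoord Rd) /= !assembleY ffunE => Ny.
  split => //; last by case: (dst j ycoord) Ny.
  + by move=> i Pi; rewrite (walk_edges_fixed He) /= !assembleP.
  + by move=> i Qi; rewrite (walk_edges_fixed He) /= !assembleQ.
- split; first by apply/eqP; apply: contraNT Nd => /waypoint9E /= <-; rewrite eqxx.
  by move=> i /waypoint9E /= Ei; rewrite (walk_edges_fixed He) ?Ei.
Qed.

Lemma walk_leg_edge j r e : r < 10 -> e \in piece_edges (leg j r) -> leg_edge j r e.
Proof.
by case: (ltnP r 5) => [lt_r5 _ | le5r lt_r]; [apply: walk_leg_edge_lo | apply: walk_leg_edge_hi; lia].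
Qed.

(* What [flip_key_inj] says of two edges of the same colour. *)
Definition same_key (e e' : V * 'I_n) :=
  e.2 = e'.2 /\ forall i : 'I_n, i < key_len k -> i != e.2 -> e.1 i = e'.1 i.

Lemma same_keyC e e' : same_key e e' -> same_key e' e.
Proof. by case=> E K; split => // i lt_i; rewrite -E => Ni; rewrite K. Qed.

Lemma same_key_agree (R : pred 'I_n) e e' : (forall i, R i -> i < key_len k) ->
  same_key e e' -> ~~ R e.2 -> agree R e.1 e'.1.
Proof. by move=> R_key [_ K] NR i Ri; apply: K; [apply: R_key | apply: contraNneq NR => <-]. Qed.

Lemma same_keyP e e' : same_key e e' -> ~~ inP e.2 -> agree inP e.1 e'.1.
Proof. by apply: same_key_agree => i; rewrite /inP /key_len; lia. Qed.

Lemma same_keyQ e e' : same_key e e' -> ~~ inQ e.2 -> agree inQ e.1 e'.1.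
Proof. by apply: same_key_agree => i; rewrite /inQ /key_len; lia. Qed.

Lemma same_keyQo e e' : same_key e e' -> ~~ inQo e.2 -> agree inQo e.1 e'.1.
Proof. by apply: same_key_agree => i; rewrite /inQo /key_len; lia. Qed.

Lemma same_key_flip_tags (a b : V) (c1 c2 : 'I_n) e e' : same_key e e' -> e.2 = c1 -> e'.2 = c2 ->
  (forall i, i != c1 -> e.1 i = a i) -> (forall i, i != c2 -> e'.1 i = b i) -> c1 < p ->
  agree inP (flip a c1) (flip b c2) \/ agree inP (flip a c1) b.
Proof.
move=> [E K] <- <- Ea Eb lt_cp; rewrite -E.
have Eab i : inP i -> i != e.2 -> a i = b i.
  by move=> Pi Ni; rewrite -Ea // K // ?Eb -?E //; move: Pi; rewrite /inP /key_len; lia.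
case: (eqVneq (a e.2) (b e.2)) => [Ac | Nc]; [left | right] => i Pi; rewrite !flipE.
  by case: eqVneq => [-> | Ni]; rewrite ?Ac ?Eab.
by case: eqVneq => [-> | Ni]; [case: (a _) (b _) Nc => [] [] | rewrite Eab].
Qed.

Definition edge_phase r :=
  if r == 0 then 0 else if r < 5 then 1 else if r == 5 then 2 else if r < 9 then 3 else 4.

Lemma leg_edge_phase j r e : r < 10 -> leg_edge j r e ->
  [\/ [/\ edge_phase r = 1, ~~ inP e.2 & agree inP e.1 (tagG j)],
      [/\ edge_phase r = 3, ~~ inP e.2 & agree inP e.1 (tagG' j)],
      [/\ edge_phase r = 2, inP e.2 & agree inQ e.1 (tagQ j)]
    | [/\ edge_phase r = 0, e.2 = tag_dir j & forall i, i != tag_dir j -> e.1 i = src j i] \/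
      [/\ edge_phase r = 4, e.2 = tag_dir (k + j)
        & forall i, i != tag_dir (k + j) -> e.1 i = dst j i]].
Proof.
case: r => [|[|[|[|[|[|[|[|[|[|r]]]]]]]]]] //= _.
- by case=> A B; apply: Or44; left.
- by case=> A B C; apply: Or41; split => //; move: A; rewrite /inR /inP; lia.
- by case=> A B C D; apply: Or41; split => //; rewrite A ycoord_notin_P.
- by case=> A B C; apply: Or41; split => //; move: A; rewrite /inQo /inP; lia.
- by case=> A B C; apply: Or41; split => //; rewrite A ycoord_notin_P.
- by case=> A B; apply: Or43.
- by case=> A B C; apply: Or42; split => //; rewrite A ycoord_notin_P.
- by case=> A B C; apply: Or42; split => //; move: A; rewrite /inQo /inP; lia.
- by case=> A B C D; apply: Or42; split => //; rewrite A ycoord_notin_P.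
- by case=> A B; apply: Or44; right.
Qed.

(* An edge outside P sees the P-tag of its phase, an edge inside P sees the
   Q-tag, and an edge flipping a tag coordinate sees its tag by
   [same_key_flip_tags]; distinct tags never match. *)
Lemma leg_edge_segment j j' r r' e e' : j < k -> j' < k -> r < 10 -> r' < 10 ->
  leg_edge j r e -> leg_edge j' r' e' -> same_key e e' -> j = j' /\ edge_phase r = edge_phase r'.
Proof.
move=> lt_j lt_j' lt_r lt_r' D D' K; have K' := same_keyC K; have [E2 _] := K.
case: (leg_edge_phase lt_r D) => [[-> N1 A1] | [-> N1 A1] | [-> N1 A1] | [[-> N1 A1] | [-> N1 A1]]];
case: (leg_edge_phase lt_r' D') => [[-> N2 A2] | [-> N2 A2] | [-> N2 A2] | [[-> N2 A2] | [-> N2 A2]]].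
all: try (by exfalso; move: N1; rewrite E2 N2).
all: try (by exfalso; move: N2; rewrite -E2 N1).
all: try (by exfalso; move: N1; rewrite E2 N2 /inP tag_dir_inP).
all: try (by exfalso; move: N2; rewrite -E2 N1 /inP tag_dir_inP).
all: try (have A := agree_trans (same_keyP K N1) A1).
all: try (by split => //; apply: agreeG_inj A A2).
all: try (by exfalso; apply: agreeG_G'F A A2).
all: try (by exfalso; apply: agreeG_G'F A2 A).
all: try (by split => //; apply: agreeG'_inj A A2).
all: try (have B := agree_trans (same_keyQ K (inP_notin_Q N1)) A1).
all: try (by split => //; apply: agreeQ_inj B A2).
all: try (have B' := agree_trans (same_keyQ K' (inP_notin_Q N2)) A2).
all: try (by exfalso; apply: (agreeQ_targetF lt_j (src_mem lt_j') B) => i Qi;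
  apply: A2; apply: contraTneq Qi => ->; rewrite -N2 -E2; apply: inP_notin_Q).
all: try (by exfalso; apply: (agreeQ_targetF lt_j (dst_mem j') B) => i Qi;
  apply: A2; apply: contraTneq Qi => ->; rewrite -N2 -E2; apply: inP_notin_Q).
all: try (by exfalso; apply: (agreeQ_targetF lt_j' (src_mem lt_j) B') => i Qi;
  apply: A1; apply: contraTneq Qi => ->; rewrite -N1 E2; apply: inP_notin_Q).
all: try (by exfalso; apply: (agreeQ_targetF lt_j' (dst_mem j) B') => i Qi;
  apply: A1; apply: contraTneq Qi => ->; rewrite -N1 E2; apply: inP_notin_Q).
all: try (split; last done).
all: have T := same_key_flip_tags K N1 N2 A1 A2 (tag_dir_inP _).
all: rewrite -/(tagG j) -/(tagG' j) -/(tagG j') -/(tagG' j') in T.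
all: try (case: T => T; [exact: agreeG_inj (agree_refl (tagG j)) T
  | exfalso; exact: agreeG_targetF (src_mem lt_j') (agree_refl (tagG j)) T]).
all: try (case: T => T; [exact: agreeG'_inj (agree_refl (tagG' j)) T
  | exfalso; exact: agreeG'_targetF (dst_mem j') (agree_refl (tagG' j)) T]).
all: try (exfalso; case: T => T; [exact: agreeG_G'F (agree_refl (tagG j)) T
  | exact: agreeG_targetF (dst_mem j') (agree_refl (tagG j)) T]).
all: exfalso; case: T => T; [exact: agreeG_G'F T (agree_refl (tagG' j))
  | exact: agreeG'_targetF (src_mem lt_j') (agree_refl (tagG' j)) T].
Qed.

Lemma eq_inR_inQoF (d d' : 'I_n) : d = d' -> inR d -> inQo d' -> False.
Proof. by move=> <- /inR_notin_Qo/negP. Qed.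

Lemma eq_inR_ycoordF (d d' : 'I_n) : d = d' -> inR d -> d' = ycoord -> False.
Proof. by move=> <- Rd Ed; move: Rd; rewrite Ed (negbTE ycoord_notin_R). Qed.

Lemma eq_inQo_ycoordF (d d' : 'I_n) : d = d' -> inQo d -> d' = ycoord -> False.
Proof. by move=> <- Qd Ed; move: Qd; rewrite Ed (negbTE ycoord_notin_Qo). Qed.

(* Otherwise the target [a] would agree with the Q-tag on all of Q. *)
Lemma same_key_ycoord_tagQF (a : V) j e e' : j < k -> a \in xs -> same_key e e' ->
  e.2 = ycoord -> agree inQo e.1 a -> agree inQo e'.1 (tagQ j) -> a ycoord = true -> False.
Proof.
move=> lt_jk xs_a K Ey Aa Aq ay.
have Qo_aq := agree_trans (agree_trans (same_keyQo K _) Aa) Aq.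
apply: (agreeQ_targetF lt_jk xs_a (agreeQo_Q (Qo_aq _) _) (agree_refl a)).
- by rewrite Ey ycoord_notin_Qo.
- by rewrite ay tagQ_y.
Qed.

(* Within a segment and a phase, legs flipping disjoint regions cannot share a
   key, and the y-flipping legs 2 and 4 (or 6 and 8) are told apart by the
   previous lemma. *)
Lemma leg_edge_index j r r' e e' : j < k -> r < 10 -> r' < 10 ->
  leg_edge j r e -> leg_edge j r' e' -> same_key e e' -> edge_phase r = edge_phase r' -> r = r'.
Proof.
move=> lt_jk; case: r => [|[|[|[|[|[|[|[|[|[|r]]]]]]]]]] //;
case: r' => [|[|[|[|[|[|[|[|[|[|r']]]]]]]]]] //= _ _.
all: move=> D1 D2 K _; have K' := same_keyC K; have [E2 _] := K; exfalso.
all: repeat match goal with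
  | H : [/\ _, _, _ & _] |- _ => case: H => ? ? ? ?
  | H : [/\ _, _ & _] |- _ => case: H => ? ? ?
  | H : _ /\ _ |- _ => case: H => ? ?
  end.
all: have E2' := esym E2.
all: try solve [apply: (eq_inR_inQoF E2); assumption | apply: (eq_inR_inQoF E2'); assumption
  | apply: (eq_inR_ycoordF E2); assumption | apply: (eq_inR_ycoordF E2'); assumption
  | apply: (eq_inQo_ycoordF E2); assumption | apply: (eq_inQo_ycoordF E2'); assumption].
all: try solve [apply: (same_key_ycoord_tagQF lt_jk (src_mem lt_jk) K); eassumption
  | apply: (same_key_ycoord_tagQF lt_jk (src_mem lt_jk) K'); eassumption
  | apply: (same_key_ycoord_tagQF lt_jk (dst_mem j) K); eassumption
  | apply: (same_key_ycoord_tagQF lt_jk (dst_mem j) K'); eassumption].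
Qed.

Lemma tour_keys_uniq : uniq (map (flip_key le_key_n) tour_edges).
Proof.
rewrite /tour_edges /tour_legs map_flatten -!map_comp.
apply: uniq_flatten_map; first exact: leg_labels_uniq.
  move=> l _; apply: (@map_uniq _ _ fst); rewrite /= -map_comp.
  by rewrite (eq_map (_ : fst \o flip_key le_key_n =1 snd)) // flip_edges_dirs walk_dirs_uniq.
move=> [j r] [j' r'] key; rewrite !mem_leg_labels => /andP [lt_j lt_r] /andP [lt_j' lt_r'].
move=> /mapP [e He ->] /mapP [e' He' /flip_key_inj [E1 E2]].
have K : same_key e e' by split.
have D := walk_leg_edge lt_r He; have D' := walk_leg_edge lt_r' He'.
have [E Ephase] := leg_edge_segment lt_j lt_j' lt_r lt_r' D D' K; subst j'.
by rewrite (leg_edge_index lt_j lt_r lt_r' D D' K Ephase).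
Qed.

Lemma dst_in_tour j : j < k -> dst j \in tour.
Proof.
move=> lt_jk; rewrite /tour /tour_legs -map_comp; apply/flatten_mapP.
exists (j, 9); first by rewrite mem_leg_labels lt_jk.
apply: mem_last_walk => [i Ni | ].
  by apply: waypoint9E; apply: contraNneq Ni => ->; apply: tag_dir_inP.
apply/eqP => /ffunP /(_ (tag_dir (k + j))).
by rewrite /= assembleP ?tag_dir_inP // /tagG' flipE eqxx; case: (dst j _).
Qed.

Lemma targets_in_tour : {subset xs <= tour}.
Proof.
move=> x /(nthP x0) [l]; rewrite size_xs => lt_lk <-.
case: l lt_lk => [|l] lt_lk.
  by have := dst_in_tour (_ : k.-1 < k); rewrite /dst prednK // modnn; apply; lia.
by have := dst_in_tour (_ : l < k); rewrite /dst modn_small //; apply; lia.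
Qed.

Lemma tour_closed : path (@cube_adj n) (src 0) tour /\ last (src 0) tour = src 0.
Proof.
have [chain_legs end_legs] := tour_legs_chain.
by have [? ] := chain_path chain_legs; rewrite end_legs.
Qed.

Lemma tour_cycle : is_cube_cycle tour.
Proof.
have [tour_path tour_last] := tour_closed.
rewrite /is_cube_cycle tour_uniq (cycle_path (src 0)) tour_last tour_path !andbT.
by have := uniq_leq_size uniq_xs targets_in_tour; rewrite size_xs; exact: leq_trans k_gt2.
Qed.

Lemma tour_rainbow : rainbow_cycle (prefix_colour le_key_n ycoord) tour.
Proof.
split; first exact: tour_cycle.
have [chain_legs _] := tour_legs_chain.
rewrite (uniq_cycle_colours _ tour_closed.2) (chain_zip chain_legs) -map_comp.
rewrite (eq_map (_ : _ =1 enum_rank \o flip_key le_key_n)); last first.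
  by move=> [w i]; rewrite /= prefix_colour_flip.
by rewrite map_comp map_inj_uniq ?tour_keys_uniq //; apply: enum_rank_inj.
Qed.

Lemma exists_rainbow_cycle_through :
  exists c, rainbow_cycle (prefix_colour le_key_n ycoord) c /\ {subset xs <= c}.
Proof. by exists tour; split; [apply: tour_rainbow | apply: targets_in_tour]. Qed.

End Tour.

Arguments inP k {n} _.
Arguments inQ k {n} _.


Lemma exists_notin_image (T : eqType) m (f : 'I_m -> T) (s : seq T) :
  injective f -> size s < m -> exists c, f c \notin s.
Proof.
move=> f_inj lt_s_m; case: (boolP [exists c, f c \notin s]) => [/existsP // | /existsPn f_s].
have : size (map f (enum 'I_m)) <= size s.
  apply: uniq_leq_size; first by rewrite map_inj_uniq ?enum_uniq.
  by move=> _ /mapP [c _ ->]; move: (f_s c); rewrite negbK.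
by rewrite size_map size_enum_ord; lia.
Qed.

Lemma greedy_choice (T : eqType) m (fam : nat -> 'I_m -> T) (forbidden : seq T) K (c0 : 'I_m) :
  (forall j, injective (fam j)) -> size forbidden + K <= m ->
  exists sel : nat -> 'I_m,
    (forall j1 j2, j1 < K -> j2 < K -> fam j1 (sel j1) = fam j2 (sel j2) -> j1 = j2) /\
    (forall j, j < K -> fam j (sel j) \notin forbidden).
Proof.
move=> fam_inj; elim: K => [|K IH] le_Km; first by exists (fun _ => c0).
have [sel [sel_inj sel_fresh]] := IH ltac:(lia).
set used := forbidden ++ [seq fam j (sel j) | j <- iota 0 K].
have [c c_fresh] := @exists_notin_image _ _ (fam K) used (fam_inj K)
  ltac:(rewrite size_cat size_map size_iota; lia).
move: c_fresh; rewrite mem_cat negb_or => /andP [c_forb c_used].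
have fam_used j : j < K -> fam j (sel j) \in [seq fam j (sel j) | j <- iota 0 K].
  by move=> lt_jK; apply: (map_f (fun j => fam j (sel j))); rewrite mem_iota.
exists (fun j => if j == K then c else sel j); split; last first.
  by move=> j lt_j; case: eqP => [-> // | /eqP ne_jK]; apply: sel_fresh; lia.
move=> j1 j2 lt_j1 lt_j2; case: (eqVneq j1 K) => [-> | ne1]; case: (eqVneq j2 K) => [-> | ne2] //.
- by move=> E; case/negP: c_used; rewrite E fam_used //; lia.
- by move=> E; case/negP: c_used; rewrite -E fam_used //; lia.
- by apply: sel_inj; lia.
Qed.

Section CoordsOn.
Variable n : nat.
Local Notation V := (cube_vertex n).

Definition coords_on (R : pred 'I_n) (v : V) := [seq v i | i <- enum 'I_n & R i].

Lemma coords_on_agree R (a b : V) : coords_on R a = coords_on R b -> agree R a b.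
Proof. by move/eq_in_map => E i Ri; apply: E; rewrite mem_filter Ri mem_enum. Qed.

Lemma agree_coords_on R (a b : V) : agree R a b -> coords_on R a = coords_on R b.
Proof. by move=> E; apply/eq_in_map => i; rewrite mem_filter => /andP [Ri _]; apply: E. Qed.

End CoordsOn.

Section UpperBound.
Variables (k n : nat).
Hypothesis k_gt2 : 2 < k.
Hypothesis le_key_n : key_len k <= n.
Local Notation V := (cube_vertex n).
Local Notation p := (blockP k).
Local Notation q := (blockQ k).

Lemma blockP_le : p <= n.
Proof. by move: le_key_n; rewrite /key_len; lia. Qed.

Lemma blockQo_lt (s : 'I_q) : p + s < n.
Proof. by move: le_key_n (ltn_ord s); rewrite /key_len; lia. Qed.

Definition tagQ_of (s : 'I_q) : V := [ffun i : 'I_n => (i == p + q :> nat) || (i == p + s :> nat)].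

Lemma tagQ_of_inj : injective (fun s => coords_on (inQ k) (tagQ_of s)).
Proof.
move=> s1 s2 /coords_on_agree /(_ (Ordinal (blockQo_lt s1))).
rewrite !ffunE /= eqxx orbT.
have -> : (p + s1 == p + q) = false by have := ltn_ord s1; lia.
rewrite /= => E; apply: val_inj; apply/eqP; rewrite -(eqn_add2l p) -E //.
by rewrite /inQ /=; have := ltn_ord s1; lia.
Qed.

Lemma flip_tag_inj (b : V) :
  injective (fun c : 'I_p => coords_on (inP k) (flip b (widen_ord blockP_le c))).
Proof.
move=> c1 c2 /coords_on_agree /(_ (widen_ord blockP_le c1)).
rewrite !flipE eqxx; case: (eqVneq (widen_ord blockP_le c1) (widen_ord blockP_le c2)).
  by move=> /(congr1 val) E _; apply: val_inj.
by case: (b _) => _ /(_ (ltn_ord c1)).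
Qed.

Lemma crx_colourable_key_len : crx_colourable k n #|{: colour_key n (key_len k)}|.
Proof.
exists (prefix_colour le_key_n (ycoord le_key_n)); split; first exact: prefix_colourC.
move=> S cardS; set xs := enum S; set x0 : V := [ffun => false].
have size_xs : size xs = k by rewrite -cardS cardE.
have p_gt0 : 0 < p by rewrite /blockP; lia.
have q_gt0 : 0 < q by rewrite /blockQ; lia.
pose base idx := if idx < k then src x0 xs idx else dst k x0 xs (idx - k).
have [selP [selP_inj selP_fresh]] := @greedy_choice _ _
  (fun idx c => coords_on (inP k) (flip (base idx) (widen_ord blockP_le c)))
  [seq coords_on (inP k) x | x <- xs] (2 * k) (Ordinal p_gt0)
  (fun idx => flip_tag_inj (b := base idx)) ltac:(rewrite size_map size_xs /blockP; lia).
have [selQ [selQ_inj selQ_fresh]] := @greedy_choice _ _ (fun _ s => coords_on (inQ k) (tagQ_of s))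
  [seq coords_on (inQ k) x | x <- xs] k (Ordinal q_gt0) (fun _ => tagQ_of_inj)
  ltac:(rewrite size_map size_xs /blockQ; lia).
pose tag_dir idx := widen_ord blockP_le (selP idx).
have tagP_base idx : tagP k x0 xs tag_dir idx = flip (base idx) (tag_dir idx).
  rewrite /tagP /tagG /tagG' /base; case: ifP => // /negbT.
  by rewrite -leqNgt => /subnKC ->.
have tagP_inj j1 j2 : j1 < 2 * k -> j2 < 2 * k ->
    agree (inP k) (tagP k x0 xs tag_dir j1) (tagP k x0 xs tag_dir j2) -> j1 = j2.
  by move=> lt1 lt2; rewrite !tagP_base => /agree_coords_on; apply: selP_inj.
have tagP_fresh j x : j < 2 * k -> x \in xs -> ~ agree (inP k) (tagP k x0 xs tag_dir j) x.
  move=> lt_j xs_x; rewrite tagP_base => /agree_coords_on E.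
  by case/negP: (selP_fresh j lt_j); rewrite E map_f.
have tagQ_y j : tagQ_of (selQ j) (ycoord le_key_n) = true by rewrite ffunE eqxx.
have tagQ_inj j1 j2 : j1 < k -> j2 < k ->
    agree (inQ k) (tagQ_of (selQ j1)) (tagQ_of (selQ j2)) -> j1 = j2.
  by move=> lt1 lt2 /agree_coords_on; apply: selQ_inj.
have tagQ_fresh j x : j < k -> x \in xs -> ~ agree (inQ k) (tagQ_of (selQ j)) x.
  move=> lt_j xs_x /agree_coords_on E.
  by case/negP: (selQ_fresh j lt_j); rewrite E map_f.
have [c [c_rainbow xs_c]] := exists_rainbow_cycle_through k_gt2 size_xs (enum_uniq _)
  (fun j => ltn_ord (selP j) : tag_dir j < p) tagP_inj tagP_fresh tagQ_y tagQ_inj tagQ_fresh.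
by exists c; split => // x Sx; apply: xs_c; rewrite mem_enum.
Qed.

End UpperBound.

Lemma card_colour_key n t : #|{: colour_key n t}| = n * 2 ^ t.
Proof. by rewrite card_prod card_ord card_ffun card_bool card_ord. Qed.

Lemma exists_switch (T : eqType) (f : nat -> T) a b :
  a <= b -> f a != f b -> exists2 t, a <= t < b & f t != f t.+1.
Proof.
elim: b => [|b IH] le_ab Nf; first by move: le_ab Nf; rewrite leqn0 => /eqP ->; rewrite eqxx.
case: (eqVneq a b.+1) => [E | ne_ab]; first by move: Nf; rewrite E eqxx.
case: (eqVneq (f a) (f b)) => [E | Nf'].
  by exists b; [lia | rewrite -E].
by have [t t_ab Nft] := IH ltac:(lia) Nf'; exists t => //; lia.
Qed.

Lemma cycle_rel_nth (T : Type) (e : rel T) (x0 : T) (c : seq T) t :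
  cycle e c -> t.+1 < size c -> e (nth x0 c t) (nth x0 c t.+1).
Proof.
case: c => [|x s] //= /(pathP x0) e_s lt_t.
have := e_s t; rewrite size_rcons => /(_ ltac:(lia)).
rewrite -rcons_cons !nth_rcons /=.
by have [-> ->] : t < (size s).+1 /\ t < size s by split; lia.
Qed.

Lemma cube_adj_diff_unique n (x y : cube_vertex n) i1 i2 :
  cube_adj x y -> x i1 != y i1 -> x i2 != y i2 -> i1 = i2.
Proof.
rewrite /cube_adj => /cards1P [i0 E] N1 N2.
have : i1 \in [set i | x i != y i] by rewrite inE.
have : i2 \in [set i | x i != y i] by rewrite inE.
by rewrite E !inE => /eqP -> /eqP ->.
Qed.

(* Each coordinate must switch somewhere between positions [a] and [b], and a
   step of the cycle switches only one coordinate. *)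
Lemma cube_cycle_antipodal n (x0 : cube_vertex n) (c : seq (cube_vertex n)) a b :
  cycle (@cube_adj n) c -> a <= b -> b < size c ->
  (forall i, nth x0 c a i != nth x0 c b i) -> n <= b - a.
Proof.
move=> c_cycle le_ab lt_b antipodal.
pose switch (i : 'I_n) : pred nat := fun t => (a <= t < b) && (nth x0 c t i != nth x0 c t.+1 i).
have switch_ex i : exists t, switch i t.
  have [t t_ab Nt] := exists_switch (f := fun t => nth x0 c t i) le_ab (antipodal i).
  by exists t; rewrite /switch t_ab Nt.
pose first_switch i := ex_minn (switch_ex i).
have first_switchP i : switch i (first_switch i) by rewrite /first_switch; case: ex_minnP.
have first_switch_inj : injective first_switch.
  move=> i1 i2 E; have /andP [t_ab N1] := first_switchP i1; have /andP [_ N2] := first_switchP i2.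
  apply: (cube_adj_diff_unique (cycle_rel_nth x0 c_cycle (_ : _ < size c)) N1); first lia.
  by rewrite E.
have := uniq_leq_size (s1 := map first_switch (enum 'I_n)) (s2 := iota a (b - a)).
rewrite map_inj_uniq ?enum_uniq // size_map size_enum_ord size_iota; apply => //.
move=> t /mapP [i _ ->]; have /andP [t_ab _] := first_switchP i; rewrite mem_iota; lia.
Qed.

Lemma exists_set_card_with2 (T : finType) (x y : T) k : x != y -> 2 <= k -> k <= #|T| ->
  exists S : {set T}, [/\ #|S| = k, x \in S & y \in S].
Proof.
move=> Nxy le2k le_kT.
set s := x :: y :: enum (~: [set x; y]).
have s_uniq : uniq s.
  rewrite /s /= enum_uniq !mem_enum !inE !negbK eqxx orbT /= andbT.
  by rewrite (negbTE Nxy) mem_enum !inE eqxx.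
have size_s : size s = #|T|.
  rewrite /s /= -cardE; have := cardsCs [set x; y]; rewrite cards2 Nxy /=.
  by have := max_card (~: [set x; y]); lia.
exists [set z in take k s]; split.
- by rewrite cardsE; move/card_uniqP: (take_uniq k s_uniq) => ->; rewrite size_takel // size_s.
- by rewrite inE; case: k le2k le_kT => [|[|k]] //= _ _; rewrite inE eqxx.
- by rewrite inE; case: k le2k le_kT => [|[|k]] //= _ _; rewrite !inE eqxx orbT.
Qed.

Lemma crx_colourable_ge_dim k n m : 2 <= k -> k <= 2 ^ n -> 0 < n -> crx_colourable k n m -> n <= m.
Proof.
move=> le2k le_k2n n_gt0 [col [_ col_rainbow]].
set zero : cube_vertex n := [ffun => false]; set one : cube_vertex n := [ffun => true].
have Nzero_one : zero != one by apply/eqP => /ffunP /(_ (Ordinal n_gt0)); rewrite !ffunE.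
have le_k_card : k <= #|{: cube_vertex n}| by rewrite card_ffun card_bool card_ord.
have [S [cardS S0 S1]] := exists_set_card_with2 Nzero_one le2k le_k_card.
have [c [[/and3P [_ _ c_cycle] colours_uniq] S_c]] := col_rainbow S cardS.
have size_c : size c <= m.
  have := uniq_leq_size (s2 := enum 'I_m) colours_uniq.
  rewrite size_enum_ord /cycle_colours size_map size_zip size_rot minnn; apply.
  by move=> i _; rewrite mem_enum.
have c0 := S_c _ S0; have c1 := S_c _ S1.
have antipodal i : nth zero c (index zero c) i != nth zero c (index one c) i.
  by rewrite !nth_index // !ffunE.
have lt_0 : index zero c < size c by rewrite index_mem.
have lt_1 : index one c < size c by rewrite index_mem.
case: (leqP (index zero c) (index one c)) => le01.
  by have := cube_cycle_antipodal c_cycle le01 lt_1 antipodal; lia.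
have antipodal' i : nth zero c (index one c) i != nth zero c (index zero c) i.
  by rewrite eq_sym.
by have := cube_cycle_antipodal c_cycle (ltnW le01) lt_0 antipodal'; lia.
Qed.

Lemma ex_minimal (P : nat -> Prop) m0 : P m0 -> exists m, P m /\ forall m', P m' -> m <= m'.
Proof.
elim/ltn_ind: m0 => m IH Pm.
case: (classic (exists m', P m' /\ m' < m)) => [[m' [Pm' lt_m'm]] | Nlt]; first exact: IH m' lt_m'm Pm'.
exists m; split => // m' Pm'; rewrite leqNgt; apply/negP => lt_m'm; apply: Nlt; by exists m'.
Qed.

Unset Implicit Arguments.
Import Order.TTheory GRing.Theory Num.Theory.

Theorem theorem3p7 (k : nat) (hk : (4 <= k)%N) :
  exists c_k C_k : rat, (0 < c_k)%R /\ (0 < C_k)%R /\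
    forall n : nat, (4 * k ^ 2 <= n)%N ->
      exists m : nat, is_crx k n m /\
        (c_k * n%:R <= m%:R)%R /\ (m%:R <= C_k * n%:R)%R.
Proof.
exists 1%R, (2 ^ key_len k)%:R%R; split; first exact: ltr01.
split; first by rewrite ltr0n expn_gt0.
move=> n le_n.
have k_gt2 : (2 < k)%N by lia.
move: le_n; rewrite expnS expn1 => le_n.
have le_key_n : (key_len k <= n)%N by rewrite /key_len /blockP /blockQ; nia.
have le_k_n : (k <= n)%N by nia.
have [m [colourable_m min_m]] := ex_minimal (crx_colourable_key_len k_gt2 le_key_n).
exists m; split; first by [].
split; first rewrite mul1r ler_nat.
  apply: crx_colourable_ge_dim colourable_m; [lia | | lia].
  by have := ltn_expl n (isT : (1 < 2)%N); lia.
rewrite -natrM ler_nat mulnC -card_colour_key.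
exact: min_m (crx_colourable_key_len k_gt2 le_key_n).
Qed.
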